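(* In the setting of the context (in any of the cases for the sign of $\partial_v r_-$), every radially outgoing null geodesic that is initially located outside or on the outer AH never intersects the outer AH at any later time, and reaches future null infinity, i.e. $x(v)\to\infty$ as $v\to\infty$.
   Context: Spherically symmetric spacetime $ds^2=-f(v,r)A(v,r)^2dv^2+2A(v,r)\,dr\,dv+r^2d\Omega^2$ with $A>0$, $f,A\to1$ as $r\to\infty$, $f(v,0)=1$, $\partial_rf(v,0)=\partial_rA(v,0)=0$; $f(v,\cdot)$ has exactly two zeros $r_+(v)>r_-(v)$ (outer/inner apparent horizons, AHs), $f=F(r-r_+)(r-r_-)$ with $F>0$, and $h=AF>0$. Assumptions: $\partial_v r_+<0$; $r_\pm(v)\to r_c$ as $v\to\infty$; the sign of $\partial_v r_-$ is constant; the $v\to\infty$ limits of $A,F,h$ behave as analytic functions of $r$, so all $\partial_r^n h$ converge as $v\to\infty$ (write $h(\infty,x)$ for the limit). With $x=r-r_c$, $x_\pm=r_\pm-r_c$ and $h$ regarded as a function of $(v,x)$, radially outgoing null geodesics are the solutions of $dx/dv=\tfrac12h(v,x)(x-x_+(v))(x-x_-(v))$. *)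

From Stdlib Require Import Reals.
From Coquelicot Require Import Coquelicot.
Open Scope R_scope.

Definition fmet (F : R -> R -> R) (rp rm : R -> R) (v r : R) : R :=
  F v r * (r - rp v) * (r - rm v).

Definition hfun (A F : R -> R -> R) (rc v x : R) : R :=
  A v (x + rc) * F v (x + rc).

(** The gap [D = x - x_+] satisfies [D' = h D (x - x_-) / 2 - x_+'], which equals
    [- x_+' > 0] wherever [D] vanishes; so [D] can only cross zero upwards and,
    starting from [D(v0) >= 0], stays positive.  Then [x' >= 0] and [D' > 0], so
    [x - x_- >= x - x_+ >= D(v0 + 1) > 0] from [v0 + 1] on.  If [x] were bounded
    by [M], the values [x v] would stay in a compact interval on which the
    continuous limit [h(oo, .)] has a positive minimum; by locally uniform
    convergence [h(v, x v)] is then eventually bounded below, so [x'] is bounded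
    below by a positive constant and [x] grows linearly, a contradiction. *)

From Stdlib Require Import Reals Lra Classical.
From Coquelicot Require Import Coquelicot.
Open Scope R_scope.

Lemma ex_derive_continuity_pt (f : R -> R) (t : R) :
  ex_derive f t -> continuity_pt f t.
Proof.
  intros [l Hl]. apply derivable_continuous_pt.
  exists l. exact (proj1 (is_derive_Reals f t l) Hl).
Qed.

Lemma continuity_pt_pos_locally (f : R -> R) (t : R) :
  continuity_pt f t -> 0 < f t ->
  exists d, 0 < d /\ forall s, Rabs (s - t) < d -> 0 < f s.
Proof.
  intros Hc Hpos.
  destruct (proj1 (continuity_pt_locally f t) Hc (mkposreal _ Hpos)) as [d Hd].
  exists d. split; [apply cond_pos|]. intros s Hs.
  specialize (Hd s Hs). simpl in Hd. apply Rabs_lt_between in Hd. lra.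
Qed.

Lemma is_derive_pos_crossing (f : R -> R) (t l : R) :
  is_derive f t l -> 0 < l ->
  exists d, 0 < d /\ forall s, 0 < Rabs (s - t) < d -> 0 < (f s - f t) * (s - t).
Proof.
  intros Hd Hl. destruct (proj1 (is_derive_Reals f t l) Hd l Hl) as [d Hq].
  exists d. split; [apply cond_pos|]. intros s [Hs0 Hs].
  assert (Hne : s - t <> 0) by (intros E; rewrite E, Rabs_R0 in Hs0; lra).
  specialize (Hq (s - t) Hne Hs). replace (t + (s - t)) with s in Hq by ring.
  apply Rabs_lt_between in Hq.
  replace ((f s - f t) * (s - t)) with ((f s - f t) / (s - t) * ((s - t) * (s - t)))
    by (field; exact Hne).
  apply Rmult_lt_0_compat; [lra|]. exact (Rsqr_pos_lt _ Hne).
Qed.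

Section UpcrossingZeros.

Variables (f df : R -> R) (a : R).
Hypothesis f_deriv : forall t, a <= t -> is_derive f t (df t).
Hypothesis df_pos_at_zeros : forall t, a <= t -> f t = 0 -> 0 < df t.

Lemma pos_right_of_nonneg (t : R) : a <= t -> 0 <= f t ->
  exists d, 0 < d /\ forall s, t < s < t + d -> 0 < f s.
Proof.
  intros Ht Hft. destruct (Rle_lt_or_eq_dec _ _ Hft) as [Hpos|Hzero].
  - destruct (continuity_pt_pos_locally f t) as [d [Hd Hs]]; auto.
    { apply ex_derive_continuity_pt. eexists. apply f_deriv, Ht. }
    exists d. split; [exact Hd|]. intros s Hst. apply Hs.
    rewrite Rabs_pos_eq; lra.
  - destruct (is_derive_pos_crossing f t (df t)) as [d [Hd Hs]]; auto.
    exists d. split; [exact Hd|]. intros s Hst.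
    specialize (Hs s ltac:(rewrite Rabs_pos_eq; lra)). rewrite <- Hzero in Hs. nra.
Qed.

Lemma neg_left_of_nonpos (t : R) : a <= t -> f t <= 0 ->
  exists d, 0 < d /\ forall s, t - d < s < t -> f s < 0.
Proof.
  intros Ht Hft. destruct (Rle_lt_or_eq_dec _ _ Hft) as [Hneg|Hzero].
  - destruct (continuity_pt_pos_locally (fun s => - f s) t) as [d [Hd Hs]]; [|lra|].
    { apply continuity_pt_opp, ex_derive_continuity_pt. eexists. apply f_deriv, Ht. }
    exists d. split; [exact Hd|]. intros s Hst.
    specialize (Hs s ltac:(rewrite Rabs_left; lra)). lra.
  - destruct (is_derive_pos_crossing f t (df t)) as [d [Hd Hs]]; auto.
    exists d. split; [exact Hd|]. intros s Hst.
    specialize (Hs s ltac:(rewrite Rabs_left; lra)). rewrite Hzero in Hs. nra.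
Qed.

Lemma pos_of_nonneg_start : 0 <= f a -> forall b, a < b -> 0 < f b.
Proof.
  intros Hfa b Hab. apply Rnot_le_lt. intros Hfb.
  set (E := fun t => a <= t <= b /\ forall s, a < s <= t -> 0 < f s).
  destruct (completeness E) as [m [Hub Hlub]].
  { exists b. intros t [Ht _]. lra. }
  { exists a. split; [lra|]. intros s Hs. lra. }
  assert (Ham : a <= m) by (apply Hub; split; [lra|]; intros s Hs; lra).
  assert (Hmb : m <= b) by (apply Hlub; intros t [Ht _]; lra).
  assert (Hbefore : forall s, a < s < m -> 0 < f s).
  { intros s Hs. destruct (classic (exists t, E t /\ s <= t)) as [[t [[_ Ht] Hst]]|Hn].
    - apply Ht. lra.
    - assert (m <= s); [|lra]. apply Hlub. intros t Et.
      apply Rnot_lt_le. intros Hst. apply Hn. exists t. split; [exact Et|lra]. }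
  assert (Hfm : a < m -> 0 < f m).
  { intros Hlt. apply Rnot_le_lt. intros Hfm.
    destruct (neg_left_of_nonpos m Ham Hfm) as [d [Hd Hs]].
    set (s := m - Rmin d (m - a) / 2).
    assert (0 < Rmin d (m - a)) by (apply Rmin_pos; lra).
    pose proof (Rmin_l d (m - a)). pose proof (Rmin_r d (m - a)).
    specialize (Hs s ltac:(unfold s; lra)). specialize (Hbefore s ltac:(unfold s; lra)). lra. }
  assert (Hm_lt_b : m < b).
  { destruct (Rle_lt_or_eq_dec _ _ Hmb) as [?|Heq]; [assumption|].
    subst m. specialize (Hfm Hab). lra. }
  destruct (pos_right_of_nonneg m Ham) as [d [Hd Hafter]].
  { destruct (Rle_lt_or_eq_dec _ _ Ham) as [Hlt|<-]; [apply Rlt_le, Hfm, Hlt|exact Hfa]. }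
  set (t := m + Rmin d (b - m) / 2).
  assert (0 < Rmin d (b - m)) by (apply Rmin_pos; lra).
  pose proof (Rmin_l d (b - m)). pose proof (Rmin_r d (b - m)).
  assert (Et : E t).
  { split; [unfold t; lra|]. intros s Hs.
    destruct (Rtotal_order s m) as [Hsm|[->|Hms]].
    - apply Hbefore. lra.
    - apply Hfm. lra.
    - apply Hafter. unfold t in Hs. lra. }
  specialize (Hub t Et). unfold t in Hub. lra.
Qed.

End UpcrossingZeros.

Lemma is_derive_ge_growth (f df : R -> R) (k a b : R) : a <= b ->
  (forall t, a <= t <= b -> is_derive f t (df t)) ->
  (forall t, a <= t <= b -> k <= df t) ->
  f a + k * (b - a) <= f b.
Proof.
  intros Hab Hd Hk. destruct (Rle_lt_or_eq_dec _ _ Hab) as [Hlt|<-]; [|lra].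
  destruct (MVT_cor3 f df a b Hlt) as [c [Hac [Hcb ->]]].
  { intros t Hat Htb. apply is_derive_Reals, Hd. lra. }
  specialize (Hk c ltac:(lra)). nra.
Qed.

Lemma nondecr_unbounded_is_lim (f : R -> R) (a : R) :
  (forall s t, a <= s <= t -> f s <= f t) ->
  (forall M, exists t, a <= t /\ M < f t) ->
  is_lim f p_infty p_infty.
Proof.
  intros Hmono Hunb. apply is_lim_spec. intros M.
  destruct (Hunb M) as [t [Hat HMt]]. exists t. intros s Hts.
  specialize (Hmono t s ltac:(lra)). lra.
Qed.

Definition cvg_unif_on_compacts (fv : R -> R -> R) (f : R -> R) : Prop :=
  forall a b eps, 0 < eps -> exists V, forall v z,
    V <= v -> a <= z <= b -> Rabs (fv v z - f z) < eps.

Lemma cvg_unif_continuity_pt (fv : R -> R -> R) (f : R -> R) (y : R) :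
  cvg_unif_on_compacts fv f -> (forall v, continuity_pt (fv v) y) ->
  continuity_pt f y.
Proof.
  intros Hcvg Hcont. apply continuity_pt_locally. intros eps.
  assert (He3 : 0 < eps / 3) by (pose proof (cond_pos eps); lra).
  destruct (Hcvg (y - 1) (y + 1) (eps / 3) He3) as [V HV].
  assert (Hnear : locally y (fun u => Rabs (u - y) < 1)).
  { exact (proj1 (continuity_pt_locally id y) (continuity_pt_id y) (mkposreal 1 Rlt_0_1)). }
  assert (HfV := proj1 (continuity_pt_locally (fv V) y) (Hcont V) (mkposreal _ He3)).
  refine (filter_imp _ _ _ (filter_and _ _ Hnear HfV)).
  intros u [Huy Hu]. simpl in Hu. apply Rabs_lt_between in Huy.
  assert (H1 := HV V u (Rle_refl V) ltac:(lra)).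
  assert (H2 := HV V y (Rle_refl V) ltac:(lra)).
  apply Rabs_lt_between in Hu. apply Rabs_lt_between in H1.
  apply Rabs_lt_between in H2. apply Rabs_lt_between. lra.
Qed.

Lemma cvg_unif_eventually_ge (fv : R -> R -> R) (f : R -> R) (a b : R) :
  cvg_unif_on_compacts fv f -> a <= b ->
  (forall z, a <= z <= b -> continuity_pt f z) ->
  (forall z, a <= z <= b -> 0 < f z) ->
  exists c V, 0 < c /\ forall v z, V <= v -> a <= z <= b -> c <= fv v z.
Proof.
  intros Hcvg Hab Hcont Hpos.
  destruct (continuity_ab_min f a b Hab Hcont) as [zmin [Hmin Hzmin]].
  specialize (Hpos zmin Hzmin).
  destruct (Hcvg a b (f zmin / 2)) as [V HV]; [lra|].
  exists (f zmin / 2), V. split; [lra|]. intros v z Hv Hz.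
  specialize (HV v z Hv Hz). specialize (Hmin z Hz).
  apply Rabs_lt_between in HV. lra.
Qed.

Definition outgoing_rhs (h : R -> R -> R) (xp xm : R -> R) (v y : R) : R :=
  / 2 * h v y * (y - xp v) * (y - xm v).

Section OutgoingNullGeodesic.

Variables (h : R -> R -> R) (hinf : R -> R) (xo : R) (xp xm dxp x : R -> R) (v0 : R).
Hypothesis xo_lt_xm : forall v, xo < xm v.
Hypothesis xm_lt_xp : forall v, xm v < xp v.
Hypothesis h_pos : forall v y, xo < y -> 0 < h v y.
Hypothesis xp_deriv : forall v, is_derive xp v (dxp v).
Hypothesis dxp_neg : forall v, dxp v < 0.
Hypothesis x_deriv : forall v, v0 <= v -> is_derive x v (outgoing_rhs h xp xm v (x v)).
Hypothesis x_init : xp v0 <= x v0.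

Lemma gap_deriv (v : R) : v0 <= v ->
  is_derive (fun v => x v - xp v) v (outgoing_rhs h xp xm v (x v) - dxp v).
Proof. intros Hv. apply (is_derive_minus x xp); auto. Qed.

Lemma xp_lt_x (v : R) : v0 < v -> xp v < x v.
Proof.
  intros Hv. cut (0 < x v - xp v); [lra|].
  apply (pos_of_nonneg_start _ _ v0 gap_deriv); [|lra|exact Hv].
  intros t _ Hzero. unfold outgoing_rhs.
  replace (x t - xp t) with 0 by lra. specialize (dxp_neg t). lra.
Qed.

Lemma xp_le_x (v : R) : v0 <= v -> xp v <= x v.
Proof.
  intros Hv. destruct (Rle_lt_or_eq_dec _ _ Hv) as [Hlt|<-]; [|exact x_init].
  apply Rlt_le, xp_lt_x, Hlt.
Qed.

Lemma outgoing_rhs_nonneg (v : R) : v0 <= v -> 0 <= outgoing_rhs h xp xm v (x v).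
Proof.
  intros Hv. pose proof (xp_le_x v Hv). pose proof (xm_lt_xp v).
  pose proof (h_pos v (x v) ltac:(specialize (xo_lt_xm v); lra)).
  unfold outgoing_rhs. apply Rmult_le_pos; [|lra].
  apply Rmult_le_pos; [|lra]. apply Rmult_le_pos; lra.
Qed.

Lemma x_nondecr (s t : R) : v0 <= s <= t -> x s <= x t.
Proof.
  intros Hst. cut (x s + 0 * (t - s) <= x t); [lra|].
  apply is_derive_ge_growth with (df := fun v => outgoing_rhs h xp xm v (x v)); [lra| |].
  - intros u Hu. apply x_deriv. lra.
  - intros u Hu. apply outgoing_rhs_nonneg. lra.
Qed.

Lemma gap_nondecr (s t : R) : v0 <= s <= t -> x s - xp s <= x t - xp t.
Proof.
  intros Hst. cut (x s - xp s + 0 * (t - s) <= x t - xp t); [lra|].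
  apply (is_derive_ge_growth (fun v => x v - xp v)
           (fun v => outgoing_rhs h xp xm v (x v) - dxp v)); [lra| |].
  - intros u Hu. apply gap_deriv. lra.
  - intros u Hu. pose proof (outgoing_rhs_nonneg u ltac:(lra)). pose proof (dxp_neg u). lra.
Qed.

Hypothesis h_cont : forall v y, continuity_pt (h v) y.
Hypothesis h_cvg : cvg_unif_on_compacts h hinf.
Hypothesis hinf_pos : forall y, xo < y -> 0 < hinf y.

Lemma x_unbounded (M : R) : exists v, v0 <= v /\ M < x v.
Proof.
  apply NNPP. intros Hbounded.
  assert (x_le_M : forall v, v0 <= v -> x v <= M).
  { intros v Hv. apply Rnot_lt_le. intros HMv. apply Hbounded. exists v. auto. }
  set (v1 := v0 + 1). set (g := x v1 - xp v1).
  assert (Hg : 0 < g) by (unfold g; pose proof (xp_lt_x v1 ltac:(unfold v1; lra)); lra).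
  assert (Hxo : xo < x v1)
    by (pose proof (xo_lt_xm v1); pose proof (xm_lt_xp v1); unfold g in Hg; lra).
  destruct (cvg_unif_eventually_ge h hinf (x v1) M h_cvg) as [c [V [Hc Hh]]].
  - apply x_le_M. unfold v1. lra.
  - intros z _. apply (cvg_unif_continuity_pt h hinf z h_cvg). intros v. apply h_cont.
  - intros z Hz. apply hinf_pos. lra.
  - set (W := Rmax v1 V). set (k := / 2 * c * g * g).
    assert (HW1 : v1 <= W) by apply Rmax_l. assert (HW2 : V <= W) by apply Rmax_r.
    assert (Hk : 0 < k)
      by (unfold k; assert (0 < c * g * g) by (apply Rmult_lt_0_compat; nra); lra).
    assert (rhs_ge_k : forall v, W <= v -> k <= outgoing_rhs h xp xm v (x v)).
    { intros v Hv.
      assert (Hgap : g <= x v - xp v) by (apply gap_nondecr; unfold v1 in *; lra).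
      assert (Hhv : c <= h v (x v)).
      { apply Hh; [lra|]. split; [apply x_nondecr|apply x_le_M]; unfold v1 in *; lra. }
      pose proof (xm_lt_xp v). unfold k, outgoing_rhs.
      apply Rmult_le_compat; try lra.
      - apply Rmult_le_pos; [apply Rmult_le_pos|]; lra.
      - apply Rmult_le_compat; [lra|lra| |lra]. apply Rmult_le_compat; lra. }
    set (v := W + (M - x W) / k + 1).
    assert (HxW : x W <= M) by (apply x_le_M; unfold v1 in *; lra).
    assert (HWv : W <= v) by (unfold v; assert (0 <= (M - x W) / k)
                                by (apply Rdiv_le_0_compat; lra); lra).
    assert (Hgrowth : x W + k * (v - W) <= x v).
    { apply (is_derive_ge_growth x (fun v => outgoing_rhs h xp xm v (x v))); [exact HWv| |].
      - intros u Hu. apply x_deriv. unfold v1 in *; lra.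
      - intros u Hu. apply rhs_ge_k. lra. }
    assert (k * (v - W) = M - x W + k) by (unfold v; field; lra).
    pose proof (x_le_M v ltac:(unfold v1 in *; lra)). lra.
Qed.

Lemma x_escapes : is_lim x p_infty p_infty.
Proof. exact (nondecr_unbounded_is_lim x v0 x_nondecr x_unbounded). Qed.

End OutgoingNullGeodesic.

Theorem lemma1
  (A F : R -> R -> R) (rp rm : R -> R) (rc : R) (hinf : R -> R)
  (* smoothness in r of A and F *)
  (HAsm : forall v n r, ex_derive_n (fun s => A v s) n r)
  (HFsm : forall v n r, ex_derive_n (fun s => F v s) n r)
  (* positivity *)
  (HApos : forall v r, 0 <= r -> 0 < A v r)
  (HFpos : forall v r, 0 <= r -> 0 < F v r)
  (* exactly two apparent horizons 0 < r_- < r_+ *)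
  (Hrm : forall v, 0 < rm v)
  (Hrmp : forall v, rm v < rp v)
  (* asymptotics as r -> oo *)
  (HfInf : forall v, is_lim (fun r => fmet F rp rm v r) p_infty 1)
  (HAInf : forall v, is_lim (fun r => A v r) p_infty 1)
  (* regularity at the center *)
  (Hf0 : forall v, fmet F rp rm v 0 = 1)
  (Hf0' : forall v, is_derive (fun r => fmet F rp rm v r) 0 0)
  (HA0' : forall v, is_derive (fun r => A v r) 0 0)
  (* d r_+/dv < 0 *)
  (Hrpd : forall v, ex_derive rp v /\ Derive rp v < 0)
  (* r_+-, r_- -> r_c as v -> oo *)
  (Hrplim : is_lim rp p_infty rc)
  (Hrmlim : is_lim rm p_infty rc)
  (* the sign of d r_-/dv is constant *)
  (Hrmd : forall v, ex_derive rm v)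
  (Hrmsign : (forall v, 0 < Derive rm v) \/ (forall v, Derive rm v = 0)
             \/ (forall v, Derive rm v < 0))
  (* v -> oo limit of h: all r-derivatives converge ... *)
  (HhlimN : forall n x,
      is_lim (fun v => Derive_n (fun y => hfun A F rc v y) n x) p_infty
             (Derive_n hinf n x))
  (* ... locally uniformly (the limit behaves as an analytic function) *)
  (Hhunif : forall a b eps, 0 < eps -> exists V, forall v x,
      V <= v -> a <= x <= b -> Rabs (hfun A F rc v x - hinf x) < eps)
  (* the limit h(oo, x) is still positive in the region r > 0 *)
  (Hhinfpos : forall x, - rc < x -> 0 < hinf x)
  (* a radially outgoing null geodesic x(v), v >= v0 *)
  (x : R -> R) (v0 : R)
  (Hgeo : forall v, v0 <= v ->
      is_derive x v
        (/ 2 * hfun A F rc v (x v) * (x v - (rp v - rc)) * (x v - (rm v - rc))))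
  (* initially outside or on the outer AH *)
  (Hinit : rp v0 - rc <= x v0) :
  (forall v, v0 < v -> rp v - rc < x v) /\ is_lim x p_infty p_infty.
Proof.
  assert (xp_deriv : forall v, is_derive (fun v => rp v - rc) v (Derive rp v)).
  { intros v. rewrite <- (Rminus_0_r (Derive rp v)).
    apply (is_derive_minus rp (fun _ => rc)); [apply Derive_correct, Hrpd|].
    exact (is_derive_const (K := R_AbsRing) (V := R_NormedModule) rc v). }
  assert (h_pos : forall v y, - rc < y -> 0 < hfun A F rc v y).
  { intros v y Hy. apply Rmult_lt_0_compat; [apply HApos|apply HFpos]; lra. }
  assert (h_cont : forall v y, continuity_pt (hfun A F rc v) y).
  { intros v y. apply ex_derive_continuity_pt, ex_derive_mult.
    - apply (ex_derive_comp (A v) (fun y => y + rc)); [exact (HAsm v 1%nat _)|auto_derive; auto].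
    - apply (ex_derive_comp (F v) (fun y => y + rc)); [exact (HFsm v 1%nat _)|auto_derive; auto]. }
  assert (xo_lt_xm : forall v, - rc < rm v - rc) by (intros v; specialize (Hrm v); lra).
  assert (xm_lt_xp : forall v, rm v - rc < rp v - rc) by (intros v; specialize (Hrmp v); lra).
  assert (dxp_neg : forall v, Derive rp v < 0) by (intros v; apply Hrpd).
  split.
  - intros v.
    apply xp_lt_x with (h := hfun A F rc) (xp := fun v => rp v - rc)
      (xm := fun v => rm v - rc) (dxp := Derive rp) (v0 := v0); assumption.
  - apply x_escapes with (h := hfun A F rc) (hinf := hinf) (xo := - rc)
      (xp := fun v => rp v - rc) (xm := fun v => rm v - rc) (dxp := Derive rp) (v0 := v0);
      assumption.
Qed.
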